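(* Let $\Gamma=(V,E,\ell)$ be a connected finite labeled simplicial graph with all labels even whose Artin group is of FC-type, let $\mathbb{K}$ be a field of characteristic $0$, and let $\chi:A_\Gamma\to\mathbb{Z}$ be a surjective non-resonant homomorphism. Then: (a) every $1$-acyclic pair $(\bar X,\bar Y)$ of order $r=|V|-s$ is of the form: $\bar X$ is the set of edges of a spanning $s$-forest $F_s=T_1\cup\dots\cup T_s$ of $\Gamma$ and $\bar Y^c=V\setminus\bar Y=\{v_1,\dots,v_s\}$ with $v_i\in V_{T_i}$, i.e. $(F_s,\bar v)$ is a rooted spanning $s$-forest; (b) if $(F_s,\bar v)$, $\bar v=(v_1,\dots,v_s)$, is a rooted spanning $s$-forest, $(F'_{s+1},\bar v')$ is obtained by deleting one edge $e$ of $F_s$ and taking $\bar v'=(v_1,\dots,v_s,v_{s+1})$ with $v_{s+1}$ a vertex of the newly created tree not containing any of $v_1,\dots,v_s$, and $(\bar X,\bar Y)$, $(\bar X',\bar Y')$ are the corresponding $1$-acyclic pairs, then for any $d\ge1$ and any root $\zeta_d$ of $\Phi_d(t)$, the multiplicities $m$ and $m'$ of $\zeta_d$ as a root of $\mathfrak{m}^\chi_{(\bar X,\bar Y)}$ and of $\mathfrak{m}^\chi_{(\bar X',\bar Y')}$ respectively satisfy $m\le m'+2$.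
   Context: $\Gamma$ has labels $\ell(e)=2\tilde\ell(e)$, $\tilde\ell(e)\ge1$; $A_\Gamma=\langle g_v\ (v\in V)\mid (g_vg_w)^{\tilde\ell(e)}=(g_wg_v)^{\tilde\ell(e)},\ e=\{v,w\}\in E\rangle$; FC-type means that for every clique $X$ the Coxeter group on $g_v$ ($v\in X$) with $g_v^2=1$, $(g_vg_w)^{\ell(\{v,w\})}=1$ is finite. $m_v=\chi(g_v)$; non-resonant means $m_v\ne0$ for all $v\in V$. $\Phi_d(t)$ is the $d$-th cyclotomic polynomial; $q_n(x)=(x^n-1)/(x-1)$. Fix a total order on $V$. The equivariant complex in degrees $1,0$: $C^\chi_1$ is free over $\mathbb{K}[t^{\pm1}]$ on $\sigma^\chi_e$, $e\in E$, $C^\chi_0$ free on $\sigma^\chi_v$, $v\in V$, and for $e=\{v<w\}$, $\partial^\chi_1\sigma^\chi_e=\big[(t^{m_v}-1)\sigma^\chi_w-(t^{m_w}-1)\sigma^\chi_v\big]q_{\tilde\ell(e)}(t^{m_v+m_w})$. $M^\chi_1(t)$ is its matrix; for a list $\bar X$ of $r$ distinct edges and $\bar Y$ of $r$ distinct vertices, $\mathfrak{m}^\chi_{(\bar X,\bar Y)}$ is the corresponding $r\times r$ minor of $M^\chi_1(t)$ (defined up to sign). $(\bar X,\bar Y)$ is $1$-acyclic of order $r$ if $|\bar X|=|\bar Y|=r$ and $H_*(N(\bar X),N(\bar Y^c);\mathbb{K})=0$, where $N(\bar X)$ is the graph with vertex set $V$ and edge set $\bar X$, and $N(\bar Y^c)$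 is its subcomplex consisting of the empty simplex and the vertices not in $\bar Y$ (homology of the augmented chain complexes). A spanning $s$-forest is a subgraph $F_s=T_1\sqcup\dots\sqcup T_s$ of $\Gamma$ which is a disjoint union of $s$ trees (a tree may be a single vertex) with $\bigcup_iV_{T_i}=V$; a rooted spanning $s$-forest is such an $F_s$ together with $\bar v=(v_1,\dots,v_s)$, $v_i\in V_{T_i}$. *)

From HB Require Import structures.
From mathcomp Require Import all_boot all_order all_algebra.
From mathcomp Require Import cyclotomic.
Set Implicit Arguments. Unset Strict Implicit. Unset Printing Implicit Defensive.
Import Order.TTheory GRing.Theory Num.Theory.
Local Open Scope ring_scope.

(* The vertex set is V = 'I_n, whose natural
   order is the fixed total order on V.  The graph is an irreflexive,
   symmetric relation [adj]; [lab v w] is tilde-ell({v,w}) (so that the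
   Artin/Coxeter label is ell = 2 * lab), meaningful on edges only.      *)

Definition simple_graph (n : nat) (adj : rel 'I_n) : Prop :=
  irreflexive adj /\ symmetric adj.

Definition even_labeling (n : nat) (adj : rel 'I_n) (lab : 'I_n -> 'I_n -> nat)
  : Prop :=
  forall v w, adj v w -> (lab v w = lab w v /\ (1 <= lab v w)%N).

Definition connected_graph (n : nat) (adj : rel 'I_n) : Prop :=
  forall v w : 'I_n, connect adj v w.

(* An (oriented) edge e = {v < w} is stored as the pair (v, w). *)
Definition is_edge (n : nat) (adj : rel 'I_n) (e : 'I_n * 'I_n) : bool :=
  (e.1 < e.2)%N && adj e.1 e.2.

(* The Coxeter group W_X on generators g_v (v in X) with relations
   g_v^2 = 1 and (g_v g_w)^(ell{v,w}) = 1 is presented as words over X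
   modulo the congruence generated by the relators (since generators are
   involutions the monoid presentation is the group presentation).       *)

Definition word_over (n : nat) (X : {set 'I_n}) (u : seq 'I_n) : bool :=
  all (fun v => v \in X) u.

Inductive cox_rel (n : nat) (lab : 'I_n -> 'I_n -> nat) (X : {set 'I_n})
  : seq 'I_n -> seq 'I_n -> Prop :=
| cox_sq v : v \in X -> cox_rel lab X [:: v; v] [::]
| cox_braid v w : v \in X -> w \in X -> v != w ->
    cox_rel lab X (flatten (nseq (2 * lab v w) [:: v; w])) [::].

Inductive cox_eq (n : nat) (lab : 'I_n -> 'I_n -> nat) (X : {set 'I_n})
  : seq 'I_n -> seq 'I_n -> Prop :=
| cox_refl u : cox_eq lab X u u
| cox_symm u w : cox_eq lab X u w -> cox_eq lab X w u
| cox_trans u w z : cox_eq lab X u w -> cox_eq lab X w z -> cox_eq lab X u z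
| cox_ctx a b u w : cox_rel lab X u w ->
    cox_eq lab X (a ++ u ++ b) (a ++ w ++ b).

Definition coxeter_finite (n : nat) (lab : 'I_n -> 'I_n -> nat)
  (X : {set 'I_n}) : Prop :=
  exists S : seq (seq 'I_n),
    forall u, word_over X u -> exists2 w, w \in S & cox_eq lab X u w.

Definition is_clique (n : nat) (adj : rel 'I_n) (X : {set 'I_n}) : Prop :=
  forall v w, v \in X -> w \in X -> v != w -> adj v w.

Definition FC_type (n : nat) (adj : rel 'I_n) (lab : 'I_n -> 'I_n -> nat)
  : Prop :=
  forall X : {set 'I_n}, is_clique adj X -> coxeter_finite lab X.

(* By the universal property of the
   presentation, homomorphisms A_Gamma -> Z are exactly assignments
   m : V -> Z of the generators (all relators map to 0 in Z).  chi is
   surjective iff its image (the subgroup generated by the m_v) contains 1. *)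

Definition chi_surjective (n : nat) (m : 'I_n -> int) : Prop :=
  exists c : 'I_n -> int, \sum_(v < n) c v * m v = 1.

Definition non_resonant (n : nat) (m : 'I_n -> int) : Prop :=
  forall v, m v != 0.

(* The matrix M^chi_1(t) over K[t^{+-1}] (inside the fraction field of
   K[t]) and its minors.                                               *)

Section Laurent.
Variable K : fieldType.

Definition tL : {fraction {poly K}} := tofrac ('X : {poly K}).

Definition qn (k : nat) (x : {fraction {poly K}}) : {fraction {poly K}} :=
  \sum_(j < k) x ^+ j.

(* coefficient of sigma_u in d_1(sigma_e), e = (v, w) with v < w *)
Definition bd_entry (n : nat) (lab : 'I_n -> 'I_n -> nat) (m : 'I_n -> int)
  (e : 'I_n * 'I_n) (u : 'I_n) : {fraction {poly K}} :=
  let v := e.1 in let w := e.2 in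
  let q := qn (lab v w) (tL ^ (m v + m w)) in
  if u == w then (tL ^ m v - 1) * q
  else if u == v then - ((tL ^ m w - 1) * q)
  else 0.

Definition chi_minor (n : nat) (lab : 'I_n -> 'I_n -> nat) (m : 'I_n -> int)
  (r : nat) (X : 'I_r -> 'I_n * 'I_n) (Y : 'I_r -> 'I_n)
  : {fraction {poly K}} :=
  \det (\matrix_(i < r, j < r) bd_entry lab m (X i) (Y j)).

(* 1-acyclic pairs: H_*(N(X), N(Y^c); K) = 0.  The augmented relative
   chain complex is 0 -> K^X --d--> K^Y -> 0 (the empty simplex and the
   vertices outside Y lie in the subcomplex), with d(v,w) = w - v
   restricted to the Y-coordinates.  H_1 = ker d, H_0 = coker d.       *)

Definition rel_bd (n r : nat) (X : 'I_r -> 'I_n * 'I_n) (Y : 'I_r -> 'I_n)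
  : 'M[K]_(r, r) :=
  \matrix_(i < r, j < r)
     ((Y j == (X i).2)%:R - (Y j == (X i).1)%:R).

Definition one_acyclic (n : nat) (adj : rel 'I_n) (r : nat)
  (X : 'I_r -> 'I_n * 'I_n) (Y : 'I_r -> 'I_n) : Prop :=
  [/\ injective X, (forall i, is_edge adj (X i)), injective Y,
      (forall u : 'rV[K]_r, u *m rel_bd X Y = 0 -> u = 0)
    & (forall y : 'rV[K]_r, exists u, u *m rel_bd X Y = y)].

End Laurent.

Definition sub_adj (n : nat) (Es : {set 'I_n * 'I_n}) : rel 'I_n :=
  fun u w => ((u, w) \in Es) || ((w, u) \in Es).

Definition acyclic_graph (n : nat) (Es : {set 'I_n * 'I_n}) : Prop :=
  ~ exists c : seq 'I_n, [&& cycle (sub_adj Es) c, uniq c & (2 < size c)%N].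

Definition spanning_forest (n : nat) (adj : rel 'I_n) (s : nat)
  (Es : {set 'I_n * 'I_n}) : Prop :=
  [/\ {subset Es <= is_edge adj}, acyclic_graph Es
    & n_comp (sub_adj Es) (@predT 'I_n) = s].

Definition rooted_spanning_forest (n : nat) (adj : rel 'I_n) (s : nat)
  (Es : {set 'I_n * 'I_n}) (vs : 'I_s -> 'I_n) : Prop :=
  spanning_forest adj s Es /\
  (forall i j, connect (sub_adj Es) (vs i) (vs j) -> i = j).
Arguments rooted_spanning_forest {n} adj s Es vs.

From HB Require Import structures.
From mathcomp Require Import all_boot all_order all_algebra.
From mathcomp Require Import cyclotomic separable.
From mathcomp Require Import ring zify.
Set Implicit Arguments. Unset Strict Implicit. Unset Printing Implicit Defensive.
Import Order.TTheory GRing.Theory Num.Theory.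
Local Open Scope ring_scope.

(* (a) If [rel_bd] is invertible, every vertex is joined by the edges [X] to a
   vertex outside [Y] (otherwise the indicator of its component would lie in the
   kernel), two vertices outside [Y] are never joined and there is no cycle (in
   both cases solving [rel_bd x = t] for a suitable [t] yields a potential that
   is constant along a path but jumps between its ends). So the components are
   trees, each containing exactly one vertex outside [Y].
   (b) Every row of [M_1^chi] kills the vector [(t^(m_u) - 1)_u], so a minor
   vanishes as soon as its columns contain a whole component of its rows. With
   [e = {c, p}] and [c] in the new tree, expanding the first minor along [e] and
   trading the column [c] for the new root [v'] in the second one give
     (t^(m_v') - 1) m = ± (t^(m_e1) - 1) (t^(m_e2) - 1) q_l(t^(m_e1 + m_e2)) m'.
   In characteristic 0 each factor on the right has only simple roots, and a
   common root of the first two is not a root of the third. *)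

Section SubGraphs.
Variable n : nat.
Implicit Types (Es : {set 'I_n * 'I_n}) (e : 'I_n * 'I_n).

Lemma sub_adj_sym Es : symmetric (sub_adj Es).
Proof. by move=> u w; rewrite /sub_adj orbC. Qed.

Lemma connect_sub_adj_sym Es : connect_sym (sub_adj Es).
Proof. exact/sym_connect_sym/sub_adj_sym. Qed.

Lemma sub_adj_imset r (X : 'I_r -> 'I_n * 'I_n) u w :
  sub_adj [set X i | i : 'I_r] u w -> exists i, X i = (u, w) \/ X i = (w, u).
Proof. by case/orP=> /imsetP[i _ E]; exists i; [left | right]. Qed.

Lemma sub_adj_setD1 Es e u w :
  sub_adj Es u w -> u \notin [:: e.1; e.2] -> sub_adj (Es :\ e) u w.
Proof.
rewrite /sub_adj !in_setD1 !inE negb_or => Fuw /andP[u1 u2].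
have uwNe : (u, w) != e by apply: contraNneq u1 => <-.
have wuNe : (w, u) != e by apply: contraNneq u2 => <-.
by rewrite uwNe wuNe.
Qed.

Lemma connect_setD1W Es e u w :
  connect (sub_adj (Es :\ e)) u w -> connect (sub_adj Es) u w.
Proof.
apply: connect_sub => x y Hxy; apply: connect1; move: Hxy.
by rewrite /sub_adj !in_setD1 => /orP[] /andP[_ ->]; rewrite ?orbT.
Qed.

Lemma connect_preorder_sub (T : finType) (f : rel T) (R : rel T) :
  subrel f R -> reflexive R -> transitive R -> subrel (connect f) R.
Proof.
move=> fR Rr Rt x y /connectP[p fp ->]; elim: p x fp => //= z p IHp x /andP[fxz fp].
exact: Rt (fR _ _ fxz) (IHp _ fp).
Qed.

Lemma connect_sub_adj_const (T : eqType) (g : 'I_n -> T) Es u w :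
  (forall e, e \in Es -> g e.1 = g e.2) -> connect (sub_adj Es) u w -> g u = g w.
Proof.
move=> gE /(connect_preorder_sub (R := [rel x y | g x == g y])) /eqP-> //.
- by move=> x y /orP[] /gE /= /eqP; rewrite // eq_sym.
- by move=> x /=.
- by move=> y x z /= /eqP-> /eqP->.
Qed.

Lemma connect_setD1P Es e u w :
  e \in Es -> connect (sub_adj Es) u w ->
  let near_e z := connect (sub_adj (Es :\ e)) z e.1 ||
                  connect (sub_adj (Es :\ e)) z e.2 in
  connect (sub_adj (Es :\ e)) u w \/ near_e u && near_e w.
Proof.
move=> He Huw near_e; set F' := sub_adj (Es :\ e).
have near_eC x y : connect F' x y -> near_e x = near_e y.
  by move=> Fxy; rewrite /near_e !(same_connect (connect_sub_adj_sym _) Fxy).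
pose R := [rel x y | connect F' x y || near_e x && near_e y].
suff: R u w by case/orP; [left | right].
move: u w Huw; apply: connect_preorder_sub => [x y Fxy | x | y x z].
- have [Exy|Nxy] := eqVneq (x, y) e; first by rewrite /= /near_e -Exy !connect0 ?orbT.
  have [Eyx|Nyx] := eqVneq (y, x) e; first by rewrite /= /near_e -Eyx !connect0 ?orbT.
  by rewrite /= connect1 // /F' /sub_adj !in_setD1 Nxy Nyx.
- by rewrite /= connect0.
- move=> /orP[Fxy|/andP[Nx Ny]] /orP[Fyz|/andP[Ny' Nz]] /=.
  + by rewrite (connect_trans Fxy Fyz).
  + by rewrite (near_eC _ _ Fxy) Ny' Nz orbT.
  + by rewrite -(near_eC _ _ Fyz) Nx Ny orbT.
  + by rewrite Nx Nz orbT.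
Qed.

Lemma path_sub_adj_setD1 Es e x s :
  path (sub_adj Es) x s -> all [predC [:: e.1; e.2]] s ->
  path (sub_adj (Es :\ e)) x s.
Proof.
elim: s x => //= y s IHs x /andP[Fxy Fs] /andP[ye se].
by rewrite IHs // andbT sub_adj_sym sub_adj_setD1 // sub_adj_sym.
Qed.

Lemma cycle_connect_setD1 Es e c0 c1 c :
  cycle (sub_adj Es) [:: c0, c1 & c] -> uniq [:: c0, c1 & c] -> c != [::] ->
  (e = (c0, c1) \/ e = (c1, c0)) -> connect (sub_adj (Es :\ e)) c1 c0.
Proof.
case: c => // y s; rewrite /= rcons_path => /and3P[_ Fy /andP[Fs Fl]] Hu _ He.
case/and4P: Hu; rewrite inE negb_or => /andP[_ c0N] c1N _ _.
have eC z : z \in y :: s -> z \notin [:: e.1; e.2].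
  move=> zs; have zc0 : z != c0 by apply: contraNneq c0N => <-.
  have zc1 : z != c1 by apply: contraNneq c1N => <-.
  by case: He => -> /=; rewrite !inE !negb_or zc0 zc1.
apply: connect_trans (connect1 (sub_adj_setD1 Fl (eC _ (mem_last _ _)))).
apply/connectP; exists (y :: s) => //.
by apply/path_sub_adj_setD1; [rewrite /= Fy | apply/allP => z /eC].
Qed.

Lemma sub_adj_same_connect Es w a b :
  (a, b) \in Es -> connect (sub_adj Es) w a = connect (sub_adj Es) w b.
Proof.
by move=> abE; apply: (same_connect1r (connect_sub_adj_sym _)); rewrite /sub_adj abE.
Qed.

Lemma rooted_forest_connect_root (adj : rel 'I_n) s Es (vs : 'I_s -> 'I_n) :
  rooted_spanning_forest adj s Es vs -> forall x, exists i, connect (sub_adj Es) x (vs i).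
Proof.
move=> [[_ _ ncomp] vs_sep] x; set F := sub_adj Es.
have Fsym : connect_sym F := connect_sub_adj_sym Es.
set R := [set y | roots F y]; set I := [set fingraph.root F (vs i) | i : 'I_s].
have IR : I =i R.
  apply/subset_cardP.
    rewrite card_imset; last by move=> i j /(fingraph.rootP Fsym)/vs_sep.
    by rewrite card_ord -ncomp; apply: eq_card => y; rewrite !inE andbT.
  by apply/subsetP => _ /imsetP[i _ ->]; rewrite inE fingraph.roots_root.
have : fingraph.root F x \in I by rewrite IR inE fingraph.roots_root.
by case/imsetP=> i _ /(fingraph.rootP Fsym); exists i.
Qed.

End SubGraphs.

Section RelativeBoundary.
Variables (K : fieldType) (n r : nat) (X : 'I_r -> 'I_n * 'I_n) (Y : 'I_r -> 'I_n).
Local Notation F := (sub_adj [set X i | i : 'I_r]).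

(* A column vector indexed by [Y], extended by zero to a function on vertices:
   [rel_bd] is then the coboundary [x |-> x(w) - x(v)] on the edges [(v, w)]. *)
Definition ext0 (x : 'cV[K]_r) (u : 'I_n) : K := \sum_j (Y j == u)%:R * x j 0.

Lemma rel_bd_mulE x i :
  (rel_bd K X Y *m x) i 0 = ext0 x (X i).2 - ext0 x (X i).1.
Proof. by rewrite mxE /ext0 -sumrB; apply: eq_bigr => j _; rewrite mxE mulrBl. Qed.

Lemma ext0_out x u : u \notin codom Y -> ext0 x u = 0.
Proof.
move=> uY; rewrite /ext0 big1 // => j _.
have [Yju|] := eqVneq (Y j) u; last by rewrite mul0r.
by move: uY; rewrite -Yju codom_f.
Qed.

Hypothesis Y_inj : injective Y.

Lemma ext0_codom x j : ext0 x (Y j) = x j 0.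
Proof.
rewrite /ext0 (bigD1 j) //= eqxx mul1r big1 ?addr0 // => k kj.
by rewrite (inj_eq Y_inj) (negbTE kj) mul0r.
Qed.

Hypothesis rel_bd_unit : rel_bd K X Y \in unitmx.

Lemma rel_bd_solve (t : 'I_r -> K) :
  exists x, forall i, ext0 x (X i).2 - ext0 x (X i).1 = t i.
Proof.
exists (invmx (rel_bd K X Y) *m \col_i t i) => i.
by rewrite -rel_bd_mulE mulKVmx // mxE.
Qed.

Lemma connect_root_out u : exists2 w, connect F u w & w \notin codom Y.
Proof.
have [/existsP[w /andP[uw wY]] | /existsPn noroot] :=
  boolP [exists w, connect F u w && (w \notin codom Y)]; first by exists w.
have [j Yj] : exists j, Y j = u.
  by move: (noroot u); rewrite connect0 negbK => /codomP[j ->]; exists j.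
pose x : 'cV[K]_r := \col_k (connect F u (Y k))%:R.
have ext0E w : ext0 x w = (connect F u w)%:R.
  have [/codomP[k ->]|wY] := boolP (w \in codom Y); first by rewrite ext0_codom mxE.
  by rewrite ext0_out //; move: (noroot w); rewrite wY andbT => /negbTE->.
have : rel_bd K X Y *m x = 0.
  apply/matrixP => i k; rewrite (ord1 k) rel_bd_mulE !ext0E mxE.
  have FX : F (X i).1 (X i).2 by rewrite /sub_adj -surjective_pairing imset_f.
  by rewrite (same_connect1r (connect_sub_adj_sym _) FX) subrr.
move=> /(congr1 (mulmx (invmx (rel_bd K X Y)))); rewrite mulKmx // mulmx0.
by move/matrixP/(_ j 0); rewrite !mxE Yj connect0 => /eqP; rewrite oner_eq0.
Qed.

Lemma connect_out_eq y1 y2 : y1 \notin codom Y -> y2 \notin codom Y ->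
  connect F y1 y2 -> y1 = y2.
Proof.
move=> y1Y y2Y Fy; apply/eqP/negPn/negP => y12.
pose h w : K := (w == y2)%:R.
have [x Hx] := rel_bd_solve (fun i => h (X i).1 - h (X i).2).
pose g w := ext0 x w + h w.
have gX : forall e, e \in [set X i | i : 'I_r] -> g e.1 = g e.2.
  move=> _ /imsetP[i _ ->]; apply/eqP.
  by rewrite -subr_eq0 opprD addrACA -opprB Hx addNr.
have := connect_sub_adj_const gX Fy; rewrite /g /h !ext0_out // eqxx (negbTE y12).
by rewrite !add0r => /eqP; rewrite eq_sym oner_eq0.
Qed.

Lemma rel_bd_acyclic : acyclic_graph [set X i | i : 'I_r].
Proof.
case=> -[|c0 [|c1 c]] /and3P[Fc Hu Hs] //.
have /sub_adj_imset[i0 Ei0] : F c0 c1 by case/andP: Fc.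
have [x Hx] := rel_bd_solve (fun i => (i == i0)%:R).
have Fc10 : connect (sub_adj ([set X i | i : 'I_r] :\ X i0)) c1 c0.
  by apply: cycle_connect_setD1 Fc Hu _ _; [case: c Hs | case: Ei0 => ->; auto].
have /eqP : ext0 x c1 = ext0 x c0.
  apply: connect_sub_adj_const Fc10 => e /setD1P[Ne /imsetP[i _ Ei]]; subst e.
  have iNi0 : i != i0 by apply: contraNneq Ne => ->.
  by apply/eqP; rewrite eq_sym -subr_eq0 Hx (negbTE iNi0).
move=> E; have := Hx i0; rewrite eqxx.
by case: Ei0 => -> /=; rewrite (eqP E) subrr => /eqP; rewrite eq_sym oner_eq0.
Qed.

End RelativeBoundary.

Lemma rel_bd_surj_unitmx (K : fieldType) n r (X : 'I_r -> 'I_n * 'I_n) Y :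
  (forall y : 'rV[K]_r, exists u, u *m rel_bd K X Y = y) -> rel_bd K X Y \in unitmx.
Proof.
move=> bd_surj; rewrite -row_full_unit -sub1mx; apply/row_subP => i.
by have [u Hu] := bd_surj (row i 1%:M); apply/submxP; exists u.
Qed.

Lemma one_acyclic_rooted_forest (K : fieldType) n (adj : rel 'I_n) r s
    (X : 'I_r -> 'I_n * 'I_n) (Y : 'I_r -> 'I_n) :
  (r + s)%N = n -> one_acyclic K adj X Y ->
  exists vs : 'I_s -> 'I_n,
    rooted_spanning_forest adj s [set X i | i : 'I_r] vs /\
    (forall u, (u \notin codom Y) = (u \in codom vs)).
Proof.
move=> rsn [_ X_edge Y_inj _ /rel_bd_surj_unitmx bd_unit].
set F := sub_adj [set X i | i : 'I_r].
set Yc := [set u | u \notin codom Y].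
have cardYc : #|Yc| = s.
  have := cardC (mem (codom Y)); rewrite card_codom // !card_ord => cardYC.
  apply: (@addnI r); rewrite rsn -[RHS]cardYC; congr (_ + _).
  by apply: eq_card => u; rewrite !inE.
pose vs (i : 'I_s) := enum_val (cast_ord (esym cardYc) i).
have vsYc i : vs i \in Yc := enum_valP _.
have codom_vs u : (u \in codom vs) = (u \in Yc).
  apply/codomP/idP => [[i ->] // | uYc].
  by exists (cast_ord cardYc (enum_rank_in uYc u)); rewrite /vs cast_ordK enum_rankK_in.
have out_eq u w : u \in Yc -> w \in Yc -> connect F u w -> u = w.
  by rewrite !inE; apply: (connect_out_eq bd_unit).
exists vs; split; last by move=> u; rewrite codom_vs inE.
split; last by move=> i j /(out_eq _ _ (vsYc i) (vsYc j)) /enum_val_inj/cast_ord_inj.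
split; [by move=> _ /imsetP[i _ ->]; apply: X_edge | exact: (rel_bd_acyclic bd_unit) |].
rewrite -cardYc -(card_in_imset (f := fingraph.root F)); last first.
  by move=> u w uYc wYc /(fingraph.rootP (connect_sub_adj_sym _)); apply: out_eq.
apply: eq_card => u; rewrite !inE andbT; apply/idP/imsetP => [/eqP <- | [w _ ->]].
  have [w uw wY] := connect_root_out Y_inj bd_unit u.
  by exists w; rewrite ?inE //; apply/(fingraph.rootP (connect_sub_adj_sym _)).
by apply: fingraph.roots_root; apply: connect_sub_adj_sym.
Qed.

Definition qpoly (R : nzRingType) (l N : nat) : {poly R} := \sum_(j < l) 'X^(j * N).

Lemma map_qpoly (R S : nzRingType) (f : {rmorphism R -> S}) l N :
  map_poly f (qpoly R l N) = qpoly S l N.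
Proof. by rewrite rmorph_sum; apply: eq_bigr => j _; rewrite /= map_polyXn. Qed.

Lemma qpoly_mulXn_sub1 (R : comNzRingType) l N :
  qpoly R l N * ('X^N - 1) = 'X^(l * N) - 1.
Proof.
rewrite mulr_suml (eq_bigr (fun j : 'I_l => 'X^(j.+1 * N) - 'X^(j * N))).
  by rewrite -(big_mkord xpredT (fun j => 'X^(j.+1 * N) - 'X^(j * N))) telescope_sumr.
by move=> j _; rewrite mulrBr mulr1 -exprD mulSn addnC.
Qed.

Lemma Xn_sub1_neq0 (R : nzRingType) k : (0 < k)%N -> ('X^k - 1 : {poly R}) != 0.
Proof. by move=> k0; rewrite -size_poly_eq0 size_Xn_sub_1. Qed.

Lemma mup_poly0 (R : fieldType) (x : R) : mup x 0 = 0%N.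
Proof. by rewrite /mup; case: [arg max_(_ > _ | _) _] => -[|j] //=; rewrite size_poly0. Qed.

Lemma mup_mul_le (R : fieldType) (x : R) (P Q : {poly R}) :
  (mup x (P * Q) <= mup x P + mup x Q)%N.
Proof.
have [-> | P0] := eqVneq P 0; first by rewrite mul0r mup_poly0.
have [-> | Q0] := eqVneq Q 0; first by rewrite mulr0 mup_poly0.
by rewrite mupM.
Qed.

Section LaurentAssoc.
Variable K : fieldType.
Implicit Types (x y : {fraction {poly K}}) (P Q : {poly K}).

(* [x] and [P] are associates in [K[t, t^-1]]: they differ by a unit [± t^k]. *)
Definition laurent_assoc x P :=
  exists (k : nat) (b : bool), x = (-1) ^+ b * (tofrac P / tofrac 'X^k).

Lemma tofracXn_neq0 k : tofrac ('X^k : {poly K}) != 0.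
Proof. by rewrite tofrac_eq0 expf_neq0 // polyX_eq0. Qed.

Lemma tLXn k : tL K ^+ k = tofrac 'X^k.
Proof. by rewrite /tL tofracXn. Qed.

Lemma laurent_assoc_frac P k : laurent_assoc (tofrac P / tofrac 'X^k) P.
Proof. by exists k, false; rewrite mul1r. Qed.

Lemma laurent_assocN x P (b : bool) :
  laurent_assoc x P -> laurent_assoc ((-1) ^+ b * x) P.
Proof. by case=> k [b' ->]; exists k, (b (+) b'); rewrite signr_addb mulrA. Qed.

Lemma laurent_assocM x y P Q :
  laurent_assoc x P -> laurent_assoc y Q -> laurent_assoc (x * y) (P * Q).
Proof.
case=> [k [b ->]] [k' [b' ->]]; exists (k + k')%N, (b (+) b').
by rewrite signr_addb !tofracM exprD tofracM invfM; ring.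
Qed.

Lemma laurent_assoc_tL_sub1 (z : int) : laurent_assoc (tL K ^ z - 1) ('X^`|z| - 1).
Proof.
case: z => k; first by exists 0%N, false; rewrite mul1r tofracB -!tLXn expr0 divr1.
exists k.+1, true; rewrite tofracB -!tLXn -[tL K ^ _]/((tL K ^+ k.+1)^-1).
have : tL K ^+ k.+1 != 0 by rewrite tLXn tofracXn_neq0.
by move: (tL K ^+ k.+1) => T T0; rewrite rmorph1 expr1 mulN1r mulrBl divff // mul1r opprB.
Qed.

Lemma laurent_assoc_qn l (z : int) :
  laurent_assoc (qn l (tL K ^ z)) (qpoly K l `|z|).
Proof.
case: z => N.
  exists 0%N, false; rewrite mul1r expr0 rmorph1 divr1 /qn /qpoly rmorph_sum.
  by apply: eq_bigr => j _; rewrite /= -tLXn -exprM mulnC.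
exists (l.-1 * N.+1)%N, false.
rewrite mul1r /qn /qpoly rmorph_sum mulr_suml (reindex_inj rev_ord_inj).
apply: eq_bigr => j _; rewrite /= -!tLXn ![(_ * N.+1)%N]mulnC !exprM.
have jl : (j <= l.-1)%N by rewrite -ltnS (ltn_predK (ltn_ord j)).
rewrite -[tL K ^ _]/((tL K ^+ N.+1)^-1) -[l.-1 in RHS](subnK jl) exprD.
have -> : (l - j.+1 = l.-1 - j)%N by lia.
have : tL K ^+ N.+1 != 0 by rewrite tLXn tofracXn_neq0.
by move: (tL K ^+ N.+1) => T T0; rewrite invfM mulrCA (mulfV (expf_neq0 j T0)) mulr1 exprVn.
Qed.

Lemma laurent_assoc_eq x P Q : laurent_assoc x P -> laurent_assoc x Q ->
  exists k k' (b : bool), P * 'X^k = (-1) ^+ b * Q * 'X^k'.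
Proof.
case=> [k [b Ex]] [k' [b' Ex']]; exists k', k, (b (+) b').
apply/eqP; rewrite -tofrac_eq !tofracM rmorph_sign -eqr_div ?tofracXn_neq0 //.
by rewrite -mulrA signr_addb -mulrA -Ex' Ex signrMK.
Qed.

Lemma mup_laurent_assoc (L : fieldType) (f : {rmorphism K -> L}) zeta x P Q :
  zeta != 0 -> laurent_assoc x P -> laurent_assoc x Q ->
  mup zeta (map_poly f P) = mup zeta (map_poly f Q).
Proof.
move=> z0 xP xQ; have [k [k' [b /(congr1 (map_poly f))]]] := laurent_assoc_eq xP xQ.
have XnN k1 : ~~ root 'X^k1 zeta by rewrite rootE hornerXn expf_eq0 (negbTE z0) andbF.
rewrite !rmorphM /= !map_polyXn rmorph_sign => /(congr1 (mup zeta)).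
have signN : ~~ root ((-1) ^+ b) zeta.
  by rewrite rootE hornerE hornerN hornerC signr_eq0.
by rewrite !(mupMl _ (XnN _)) (mupMr _ signN).
Qed.

End LaurentAssoc.

Section Multiplicities.
Variables (L : fieldType) (zeta : L).
Hypothesis L_pchar0 : [pchar L] =i pred0.

Lemma mup_separable_le1 (P : {poly L}) : separable_poly P -> (mup zeta P <= 1)%N.
Proof.
move=> sepP; rewrite -ltnS mup_ltn; last exact: separable_poly_neq0.
by rewrite separable_nosquare // size_XsubC.
Qed.

Lemma mup_Xn_sub1_le1 k : (0 < k)%N -> (mup zeta ('X^k - 1) <= 1)%N.
Proof.
by move=> k0; apply/mup_separable_le1/separable_Xn_sub_1; rewrite (pcharf0P _).1 // -lt0n.
Qed.

Lemma mup_Xn_sub1_eq0 k : zeta ^+ k != 1 -> mup zeta ('X^k - 1) = 0%N.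
Proof. by move=> zk; apply: mupNroot; rewrite rootE !hornerE subr_eq0. Qed.

Lemma mup_qpoly_eq0 l N : (0 < l)%N -> zeta ^+ N = 1 -> mup zeta (qpoly L l N) = 0%N.
Proof.
move=> l0 zN; apply: mupNroot; rewrite rootE /qpoly horner_sum.
under eq_bigr do rewrite hornerXn mulnC exprM zN expr1n.
by rewrite sumr_const card_ord (pcharf0P _).1 // -lt0n.
Qed.

Lemma mup_qpoly_le1 l N : (0 < l)%N -> (mup zeta (qpoly L l N) <= 1)%N.
Proof.
move=> l0; case: (posnP N) => [-> | N0]; first by rewrite mup_qpoly_eq0 ?expr0.
apply/mup_separable_le1/(dvdp_separable (p := 'X^(l * N) - 1)).
  by rewrite -qpoly_mulXn_sub1 dvdp_mulr.
by apply: separable_Xn_sub_1; rewrite (pcharf0P _).1 // -lt0n muln_gt0 l0.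
Qed.

(* If [zeta] is a root of both [t^a - 1] and [t^b - 1] then [q_l(t^(a+b))] does
   not vanish at [zeta]; each factor has at most simple roots. *)
Lemma mup_bd_factors_le2 (a b : int) l :
  zeta != 0 -> a != 0 -> b != 0 -> (0 < l)%N ->
  (mup zeta ('X^`|a| - 1) + mup zeta ('X^`|b| - 1) + mup zeta (qpoly L l `|(a + b)%R|)
     <= 2)%N.
Proof.
move=> z0 a0 b0 l0.
have a1 : (mup zeta ('X^`|a| - 1) <= 1)%N by rewrite mup_Xn_sub1_le1 ?absz_gt0.
have b1 : (mup zeta ('X^`|b| - 1) <= 1)%N by rewrite mup_Xn_sub1_le1 ?absz_gt0.
have q1 := mup_qpoly_le1 `|(a + b)%R| l0.
have [za|/mup_Xn_sub1_eq0->] := eqVneq (zeta ^+ `|a|) 1; last lia.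
have [zb|/mup_Xn_sub1_eq0->] := eqVneq (zeta ^+ `|b|) 1; last lia.
suff -> : mup zeta (qpoly L l `|(a + b)%R|) = 0%N by lia.
apply: mup_qpoly_eq0 l0 _.
have zpow1 c : (zeta ^ c == 1) = (zeta ^+ `|c| == 1) by case: c => // k; rewrite invr_eq1.
have /eqP za' : zeta ^ a == 1 by rewrite zpow1 za.
have /eqP zb' : zeta ^ b == 1 by rewrite zpow1 zb.
by apply/eqP; rewrite -zpow1 expfzDr // za' zb' mulr1.
Qed.

End Multiplicities.

Lemma sum_codom_inj (R : nmodType) (I T : finType) (f : I -> T) (G : T -> R) :
  injective f -> (forall u, u \notin codom f -> G u = 0) ->
  \sum_i G (f i) = \sum_u G u.
Proof.
move=> f_inj Gf; rewrite (bigID (mem (f @: [set: I]))) /= [X in _ = _ + X]big1.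
  by rewrite addr0 big_imset /=; [apply: eq_bigl => i; rewrite inE | move=> i j _ _ /f_inj].
by move=> u uf; apply: Gf; apply: contra uf => /codomP[i ->]; rewrite imset_f ?inE.
Qed.

Lemma det_mx_reindex (R : comNzRingType) (T1 T2 : eqType) k (G : T1 -> T2 -> R)
    (X1 X2 : 'I_k -> T1) (Y1 Y2 : 'I_k -> T2) :
  injective X2 -> injective Y2 ->
  {subset codom X2 <= codom X1} -> {subset codom Y2 <= codom Y1} ->
  exists b : bool, \det (\matrix_(i, j) G (X2 i) (Y2 j)) =
     (-1) ^+ b * \det (\matrix_(i, j) G (X1 i) (Y1 j)).
Proof.
move=> X2_inj Y2_inj X21 Y21.
have /fin_all_exists[s Es] i : exists j, X1 j = X2 i.
  by have /codomP[j ->] := X21 _ (codom_f X2 i); exists j.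
have /fin_all_exists[t Et] i : exists j, Y1 j = Y2 i.
  by have /codomP[j ->] := Y21 _ (codom_f Y2 i); exists j.
have s_inj : injective s by move=> i j Eij; apply: X2_inj; rewrite -!Es Eij.
have t_inj : injective t by move=> i j Eij; apply: Y2_inj; rewrite -!Et Eij.
have -> : \matrix_(i, j) G (X2 i) (Y2 j) = row_perm (perm.perm s_inj)
            (col_perm (perm.perm t_inj) (\matrix_(i, j) G (X1 i) (Y1 j))).
  by apply/matrixP => i j; rewrite !mxE !perm.permE Es Et.
rewrite row_permE col_permE !det_mulmx !det_perm.
by eexists; rewrite [_ * (-1) ^+ _]mulrC mulrA -signr_addb.
Qed.

Lemma eta_with_inj (I : finType) (T : eqType) (f : I -> T) i0 u :
  injective f -> u \notin codom f -> injective [eta f with i0 |-> u].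
Proof.
move=> f_inj uf i j /=; have fNu k : (f k == u) = false.
  by apply: contraNF uf => /eqP <-; apply: codom_f.
case: eqP => [-> | _]; case: eqP => [-> // | _] /eqP; rewrite ?fNu ?(eq_sym u) ?fNu //.
by move/eqP/f_inj.
Qed.

Lemma lift_codom (T : eqType) k (Yl : 'I_k.+1 -> T) j u :
  injective Yl -> (u \in codom (Yl \o lift j)) = (u != Yl j) && (u \in codom Yl).
Proof.
move=> Yl_inj; apply/codomP/andP => [[j' ->] | [uj /codomP[j' Ej']]].
  by rewrite /= (inj_eq Yl_inj) eq_sym neq_lift codom_f.
have : j != j' by apply: contraNneq uj => ->; rewrite Ej'.
by case/unlift_some => j'' Ej'' _; exists j''; rewrite Ej' Ej''.
Qed.

Section ChiMinors.
Variables (K : fieldType) (n : nat) (lab : 'I_n -> 'I_n -> nat) (m : 'I_n -> int).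
Local Notation bd := (bd_entry K lab m).

(* The augmentation [d_0 sigma_u = (t^(m_u) - 1) sigma_empty] of the equivariant
   complex. *)
Definition bd0 (u : 'I_n) : {fraction {poly K}} := tL K ^ m u - 1.

Definition bd_q (e : 'I_n * 'I_n) := qn (lab e.1 e.2) (tL K ^ (m e.1 + m e.2)).

Definition bdmx k (Xl : 'I_k -> 'I_n * 'I_n) (Yl : 'I_k -> 'I_n) : 'M_k :=
  \matrix_(i, j) bd (Xl i) (Yl j).

Lemma bd_entryE e u : e.1 != e.2 ->
  bd e u = ((u == e.2)%:R * bd0 e.1 - (u == e.1)%:R * bd0 e.2) * bd_q e.
Proof.
move=> e12; rewrite /bd_entry /bd0 /bd_q /=.
move: (tL K ^ m e.1 - 1) (tL K ^ m e.2 - 1) (qn _ _) => a b c.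
have [->|ue2] := eqVneq u e.2; first by rewrite eq_sym (negbTE e12) /=; ring.
by case: eqP => _ /=; ring.
Qed.

Lemma sum_bd_entry_bd0 e (P : pred 'I_n) : e.1 != e.2 -> P e.1 = P e.2 ->
  \sum_(u | P u) bd e u * bd0 u = 0.
Proof.
move=> e12 Pe; rewrite big_mkcond /= (bigD1 e.2) // (bigD1 e.1) //= big1 ?addr0.
  rewrite !bd_entryE // !eqxx (negbTE e12) eq_sym (negbTE e12) Pe.
  by case: (P e.2); rewrite ?addr0 //=; ring.
move=> u /andP[ue2 ue1]; rewrite bd_entryE //.
by case: (P u); rewrite // (negbTE ue2) (negbTE ue1) /=; ring.
Qed.

Hypothesis m_neq0 : non_resonant m.

Lemma bd0_neq0 u : bd0 u != 0.
Proof.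
rewrite /bd0; have [k [b ->]] := laurent_assoc_tL_sub1 K (m u).
rewrite mulf_eq0 signr_eq0 mulf_eq0 invr_eq0 tofrac_eq0 (negbTE (tofracXn_neq0 _ _)).
by rewrite -size_poly_eq0 size_Xn_sub_1 // absz_gt0.
Qed.

(* A nonempty vertex set [C] inside [Yl] and closed under the edges [Xl]
   gives the kernel vector [(bd0 u)_(u in C)] of [bdmx Xl Yl]. *)
Lemma det_bdmx_closed_eq0 k (Xl : 'I_k -> 'I_n * 'I_n) (Yl : 'I_k -> 'I_n)
    (C : {set 'I_n}) w :
  (forall i, (Xl i).1 != (Xl i).2) -> injective Yl -> w \in C ->
  {subset C <= codom Yl} -> (forall i, ((Xl i).1 \in C) = ((Xl i).2 \in C)) ->
  \det (bdmx Xl Yl) = 0.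
Proof.
move=> Xl12 Yl_inj wC CY Cclosed; apply/eqP; rewrite -det_tr; apply/det0P.
pose x : 'rV_k := \row_j ((Yl j \in C)%:R * bd0 (Yl j)).
exists x.
  have [j Yj] : exists j, Yl j = w by have /codomP[j ->] := CY _ wC; exists j.
  by apply: contraNneq (bd0_neq0 w) => /rowP/(_ j); rewrite !mxE Yj wC mul1r => /eqP.
apply/rowP => i; rewrite !mxE.
transitivity (\sum_u bd (Xl i) u * ((u \in C)%:R * bd0 u)).
  rewrite -(sum_codom_inj (G := fun u => bd (Xl i) u * ((u \in C)%:R * bd0 u)) Yl_inj).
    by apply/eq_bigr => j _; rewrite !mxE mulrC.
  by move=> u uY; rewrite (_ : u \in C = false) ?mul0r ?mulr0 //; apply: contraNF uY => /CY.
rewrite -[RHS](sum_bd_entry_bd0 (P := fun u => u \in C) (Xl12 i) (Cclosed i)).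
rewrite [RHS]big_mkcond.
by apply: eq_bigr => u _; case: (u \in C); rewrite ?mul1r ?mul0r ?mulr0.
Qed.

(* Expand along the column [j0] and use that every row kills [(bd0 u)_u]. *)
Lemma det_bdmx_replace k (Xl : 'I_k -> 'I_n * 'I_n) (Yl : 'I_k -> 'I_n) j0 :
  (forall i, (Xl i).1 != (Xl i).2) ->
  bd0 (Yl j0) * \det (bdmx Xl Yl) =
  - \sum_(u | u \notin codom Yl) bd0 u * \det (bdmx Xl [eta Yl with j0 |-> u]).
Proof.
move=> Xl12; apply/eqP; rewrite -addr_eq0.
have col_j0 u : \det (bdmx Xl [eta Yl with j0 |-> u]) =
    \sum_i bd (Xl i) u * cofactor (bdmx Xl Yl) i j0.
  rewrite (expand_det_col _ j0); apply: eq_bigr => i _; rewrite mxE /= eqxx.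
  congr (_ * (_ * \det _)); apply/matrixP => a b; rewrite !mxE /=.
  by rewrite eq_sym (negbTE (neq_lift _ _)).
have : \sum_u bd0 u * \det (bdmx Xl [eta Yl with j0 |-> u]) = 0.
  under eq_bigr do rewrite col_j0 mulr_sumr.
  rewrite exchange_big big1 // => i _ /=.
  under eq_bigr do rewrite mulrCA mulrA.
  by rewrite -mulr_suml (sum_bd_entry_bd0 (P := xpredT) (Xl12 i)) ?mul0r.
rewrite (bigID (mem (codom Yl))) /= (bigD1 (Yl j0)) ?codom_f //= big1 ?addr0.
  have -> : bdmx Xl [eta Yl with j0 |-> Yl j0] = bdmx Xl Yl.
    by apply/matrixP => a b; rewrite !mxE /=; case: eqP => // ->.
  by move/eqP.
move=> _ /andP[/codomP[j1 ->] j1j0].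
have j10 : j1 != j0 by apply: contraNneq j1j0 => ->.
rewrite -det_tr (determinant_alternate (i1 := j0) (i2 := j1)) ?mulr0 // 1?eq_sym //.
by move=> i; rewrite !mxE /= eqxx (negbTE j10).
Qed.

Lemma bdmx_cofactor k (Xl : 'I_k.+1 -> 'I_n * 'I_n) (Yl : 'I_k.+1 -> 'I_n) i j :
  cofactor (bdmx Xl Yl) i j = (-1) ^+ (i + j) * \det (bdmx (Xl \o lift i) (Yl \o lift j)).
Proof. by rewrite /cofactor; congr (_ * \det _); apply/matrixP => a b; rewrite !mxE. Qed.

End ChiMinors.

Section DeleteEdge.
Variables (K : fieldType) (n : nat) (adj : rel 'I_n) (lab : 'I_n -> 'I_n -> nat).
Variables (m : 'I_n -> int) (s r' : nat) (Es : {set 'I_n * 'I_n}) (e : 'I_n * 'I_n).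
Variables (vs : 'I_s -> 'I_n) (vs' : 'I_s.+1 -> 'I_n).
Hypothesis m_neq0 : non_resonant m.
Hypothesis forest : rooted_spanning_forest adj s Es vs.
Hypothesis eEs : e \in Es.
Hypothesis vs'_widen : forall i : 'I_s, vs' (widen_ord (leqnSn s) i) = vs i.
Hypothesis new_root :
  forall i : 'I_s, ~~ connect (sub_adj (Es :\ e)) (vs' ord_max) (vs i).
Variables (X : 'I_r'.+1 -> 'I_n * 'I_n) (Y : 'I_r'.+1 -> 'I_n).
Variables (X' : 'I_r' -> 'I_n * 'I_n) (Y' : 'I_r' -> 'I_n).
Hypotheses (X_inj : injective X) (X_im : [set X i | i : 'I_r'.+1] = Es).
Hypotheses (Y_inj : injective Y)
  (Y_im : forall u, (u \in codom Y) = (u \notin codom vs)).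
Hypotheses (X'_inj : injective X') (X'_im : [set X' i | i : 'I_r'] = Es :\ e).
Hypotheses (Y'_inj : injective Y')
  (Y'_im : forall u, (u \in codom Y') = (u \notin codom vs')).

Local Notation F' := (sub_adj (Es :\ e)).
Local Notation v' := (vs' ord_max).
Local Notation bdmx := (bdmx K lab m).
Local Notation bd0 := (bd0 K m).

Lemma forest_edge_neq a : a \in Es -> a.1 != a.2.
Proof.
by case: forest => -[Es_adj _ _] _ /Es_adj/andP[a12 _]; rewrite neq_ltn a12.
Qed.

Lemma codom_vs' u : (u \in codom vs') = (u == v') || (u \in codom vs).
Proof.
apply/codomP/orP => [[i ->] | [/eqP-> | /codomP[i ->]]]; last 2 first.
- by exists ord_max.
- by exists (widen_ord (leqnSn s) i).
case: (unliftP ord_max i) => [j -> | ->]; [right | by left].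
rewrite (_ : lift _ j = widen_ord (leqnSn s) j) ?vs'_widen ?codom_f //.
by apply: val_inj; exact: lift_max.
Qed.

Lemma v'_notin_vs : v' \notin codom vs.
Proof. by apply/codomP => -[i Ei]; have := new_root i; rewrite -Ei connect0. Qed.

Lemma cut_edge_ends : exists c p,
  [/\ (c, p) = e \/ (p, c) = e, connect F' v' c & ~~ connect F' v' p].
Proof.
have [i0 v'i0] := rooted_forest_connect_root forest v'.
have [v'i0' | /andP[v'e i0e]] := connect_setD1P eEs v'i0.
  by have := new_root i0; rewrite v'i0'.
have sepF' u : connect F' (vs i0) u -> ~~ connect F' v' u.
  move=> i0u; apply: contra (new_root i0) => v'u.
  by apply: connect_trans v'u _; rewrite connect_sub_adj_sym.
case/orP: v'e => [v'1 | v'2]; [exists e.1, e.2 | exists e.2, e.1].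
  split=> //; first by left; rewrite -surjective_pairing.
  by case/orP: i0e => /sepF' //; rewrite v'1.
split=> //; first by right; rewrite -surjective_pairing.
by case/orP: i0e => /sepF' //; rewrite v'2.
Qed.

Section CutEdge.
Variables (c p : 'I_n).
Hypothesis e_cp : (c, p) = e \/ (p, c) = e.
Hypothesis v'c : connect F' v' c.
Hypothesis v'Np : ~~ connect F' v' p.

Lemma bd_entry_cut : exists b : bool,
  bd_entry K lab m e c = (-1) ^+ b * (bd0 p * bd_q K lab m e).
Proof.
have e12 := forest_edge_neq eEs.
case: e_cp => Ee; [exists true | exists false]; rewrite bd_entryE // -Ee /=;
  move: e12; rewrite -Ee /= eq_sym => /negbTE->; rewrite eqxx /=; ring.
Qed.

Lemma bd_entry_off_cut u : u != c -> u != p -> bd_entry K lab m e u = 0.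
Proof.
move=> uc up; rewrite bd_entryE ?forest_edge_neq //.
by case: e_cp => <- /=; rewrite (negbTE uc) (negbTE up) !mul0r subrr mul0r.
Qed.

Lemma component_closed w a : a \in Es :\ e ->
  (a.1 \in [set u | connect F' w u]) = (a.2 \in [set u | connect F' w u]).
Proof.
by move=> aE; rewrite !inE; apply: sub_adj_same_connect; rewrite -surjective_pairing.
Qed.

Lemma c_notin_vs : c \notin codom vs.
Proof. by apply/codomP => -[i Ei]; have := new_root i; rewrite -Ei v'c. Qed.

Variables (ie jc : 'I_r'.+1).
Hypotheses (X_ie : X ie = e) (Y_jc : Y jc = c).
Local Notation Mec := (\det (bdmx (X \o lift ie) (Y \o lift jc))).

Lemma X_lift_in_setD1 i : X (lift ie i) \in Es :\ e.
Proof. by rewrite in_setD1 -X_ie (inj_eq X_inj) eq_sym neq_lift -X_im imset_f. Qed.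

Lemma minor_expand_cut_edge : exists b : bool,
  chi_minor K lab m X Y = (-1) ^+ b * (bd0 p * bd_q K lab m e * Mec).
Proof.
have [b bdc] := bd_entry_cut; exists (b (+) odd (ie + jc)).
rewrite /chi_minor -/(bdmx X Y) (expand_det_row _ ie) (bigD1 jc) //= big1 ?addr0.
  by rewrite mxE X_ie Y_jc bdc bdmx_cofactor signr_addb signr_odd; ring.
move=> j jjc; rewrite mxE X_ie.
have Yjc : Y j != c by rewrite -Y_jc (inj_eq Y_inj).
have [Yjp | /(bd_entry_off_cut Yjc)-> ] := eqVneq (Y j) p; last by rewrite mul0r.
rewrite bdmx_cofactor.
rewrite (@det_bdmx_closed_eq0 K _ lab m m_neq0 _ _ _ [set u | connect F' v' u] v').
- by rewrite !mulr0.
- by move=> i; case/setD1P: (X_lift_in_setD1 i) => _ /forest_edge_neq.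
- exact/inj_comp/lift_inj.
- by rewrite inE.
- move=> u; rewrite inE lift_codom // Y_im Yjp => v'u; apply/andP; split.
    by apply: contraNneq v'Np => <-.
  by apply/codomP => -[i Ei]; have := new_root i; rewrite -Ei v'u.
by move=> i; apply/component_closed/X_lift_in_setD1.
Qed.

Lemma X'_in_setD1 i : X' i \in Es :\ e.
Proof. by rewrite -X'_im imset_f. Qed.

Lemma X'_neq i : (X' i).1 != (X' i).2.
Proof. by case/setD1P: (X'_in_setD1 i) => _ /forest_edge_neq. Qed.

Lemma det_bdmx_X'_reindex (Y2 : 'I_r' -> 'I_n) :
  injective Y2 -> (forall k, Y2 k != c) -> (forall k, Y2 k \notin codom vs) ->
  exists b : bool, \det (bdmx X' Y2) = (-1) ^+ b * Mec.
Proof.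
move=> Y2_inj Y2c Y2vs; apply: det_mx_reindex => // _ /codomP[k ->].
  rewrite lift_codom // X_ie; case/setD1P: (X'_in_setD1 k) => -> /=.
  by rewrite -X_im => /imsetP[j _ ->]; apply: codom_f.
by rewrite lift_codom // Y_jc Y2c Y_im Y2vs.
Qed.

(* The component of [vs i] in [Es :\ e] lies inside the columns. *)
Lemma det_bdmx_X'_root_eq0 j0 i :
  Y' j0 = c -> \det (bdmx X' [eta Y' with j0 |-> vs i]) = 0.
Proof.
move=> Y'j0; have vsNv' : ~~ connect F' (vs i) v' by rewrite connect_sub_adj_sym.
apply: (@det_bdmx_closed_eq0 K _ lab m m_neq0 _ _ _ [set u | connect F' (vs i) u] (vs i)).
- exact: X'_neq.
- by apply: eta_with_inj => //; rewrite Y'_im codom_vs' codom_f orbT.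
- by rewrite inE.
- move=> u; rewrite inE => iu; apply/codomP.
  have [-> | ui] := eqVneq u (vs i); first by exists j0; rewrite /= eqxx.
  have : u \in codom Y'.
    rewrite Y'_im codom_vs' negb_or; apply/andP; split.
      by apply: contraNneq vsNv' => <-.
    apply/codomP => -[i' Ei']; suff ii' : i' = i by move: ui; rewrite Ei' ii' eqxx.
    case: forest => _; apply; rewrite connect_sub_adj_sym -Ei'.
    exact: connect_setD1W iu.
  case/codomP => j1 Ej1; exists j1 => /=; case: eqP => // j10; move: vsNv'.
  by rewrite (connect_trans iu _) // Ej1 j10 Y'j0 connect_sub_adj_sym.
- by move=> k; apply/component_closed/X'_in_setD1.
Qed.

Lemma bd0_minor_swap_root : exists b : bool,
  bd0 c * chi_minor K lab m X' Y' = (-1) ^+ b * (bd0 v' * Mec).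
Proof.
have v'Y' : v' \notin codom Y' by rewrite Y'_im codom_vs' eqxx.
have Y'vs k : Y' k \notin codom vs.
  by have := codom_f Y' k; rewrite Y'_im codom_vs' negb_or => /andP[].
rewrite /chi_minor -/(bdmx X' Y').
have [cv' | cv'] := eqVneq c v'.
  have Y'c k : Y' k != c by rewrite cv'; apply: contraNneq v'Y' => <-; apply: codom_f.
  by have [b ->] := det_bdmx_X'_reindex Y'_inj Y'c Y'vs; exists b; rewrite cv' mulrCA.
have [j0 Y'j0] : exists j0, Y' j0 = c.
  have : c \in codom Y' by rewrite Y'_im codom_vs' negb_or cv' c_notin_vs.
  by case/codomP => j0 ->; exists j0.
rewrite -Y'j0 det_bdmx_replace; last exact: X'_neq.
rewrite (bigD1 v') //= big1 ?addr0; last first.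
  move=> u /andP[uY' uv']; have : u \in codom vs.
    by move: uY'; rewrite Y'_im negbK codom_vs' (negbTE uv').
  by case/codomP => i ->; rewrite det_bdmx_X'_root_eq0 // mulr0.
have Y2c k : [eta Y' with j0 |-> v'] k != c.
  rewrite /=; case: (k =P j0) => [_ | /eqP kj0]; first by rewrite eq_sym.
  by rewrite -Y'j0 (inj_eq Y'_inj).
have Y2vs k : [eta Y' with j0 |-> v'] k \notin codom vs.
  by rewrite /=; case: (k =P j0) => _; [apply: v'_notin_vs | apply: Y'vs].
have [b ->] := det_bdmx_X'_reindex (eta_with_inj (i0 := j0) Y'_inj v'Y') Y2c Y2vs.
by exists (true (+) b); rewrite signr_addb expr1 mulN1r mulNr mulrCA.
Qed.

Lemma bd0_minor_delete_edge_cut : exists b : bool,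
  bd0 v' * chi_minor K lab m X Y =
  (-1) ^+ b * (bd0 e.1 * bd0 e.2 * bd_q K lab m e * chi_minor K lab m X' Y').
Proof.
have [b1 ->] := minor_expand_cut_edge; have [b2 E2] := bd0_minor_swap_root.
have E2' : bd0 v' * Mec = (-1) ^+ b2 * (bd0 c * chi_minor K lab m X' Y').
  by rewrite E2 signrMK.
exists (b1 (+) b2); rewrite signr_addb.
transitivity ((-1) ^+ b1 * (bd0 p * bd_q K lab m e) * (bd0 v' * Mec)); first by ring.
by rewrite E2'; case: e_cp => <- /=; ring.
Qed.

End CutEdge.

Lemma bd0_minor_delete_edge : exists b : bool,
  bd0 v' * chi_minor K lab m X Y =
  (-1) ^+ b * (bd0 e.1 * bd0 e.2 * bd_q K lab m e * chi_minor K lab m X' Y').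
Proof.
have [c [p [e_cp v'c v'Np]]] := cut_edge_ends.
have [ie X_ie] : exists ie, X ie = e.
  by move: eEs; rewrite -X_im => /imsetP[i _ ->]; exists i.
have [jc Y_jc] : exists jc, Y jc = c.
  have /codomP[j ->] : c \in codom Y by rewrite Y_im (c_notin_vs v'c).
  by exists j.
exact: (bd0_minor_delete_edge_cut e_cp v'c v'Np X_ie Y_jc).
Qed.

End DeleteEdge.

Lemma mup_minor_delete_edge (K L : fieldType) (f : {rmorphism K -> L}) (zeta : L)
    (a b v : int) (l : nat) (x x' : {fraction {poly K}}) (P P' : {poly K}) :
  [pchar L] =i pred0 -> zeta != 0 -> a != 0 -> b != 0 -> v != 0 -> (0 < l)%N ->
  laurent_assoc x P -> laurent_assoc x' P' ->
  (exists sg : bool, (tL K ^ v - 1) * x =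
     (-1) ^+ sg * ((tL K ^ a - 1) * (tL K ^ b - 1) * qn l (tL K ^ (a + b)) * x')) ->
  (mup zeta (map_poly f P) <= mup zeta (map_poly f P') + 2)%N.
Proof.
move=> L0 z0 a0 b0 v0 l0 xP x'P' [sg E].
have lhs := laurent_assocM (laurent_assoc_tL_sub1 K v) xP.
have ab := laurent_assocM (laurent_assoc_tL_sub1 K a) (laurent_assoc_tL_sub1 K b).
have rhs := laurent_assocN sg (laurent_assocM
  (laurent_assocM ab (laurent_assoc_qn K l (a + b))) x'P').
rewrite -E in rhs; have := mup_laurent_assoc f z0 lhs rhs.
rewrite !rmorphM /= map_qpoly !rmorphB /= !map_polyXn !rmorph1.
have [-> | fP0] := eqVneq (map_poly f P) 0; first by rewrite mup_poly0.
rewrite mupM ?Xn_sub1_neq0 ?absz_gt0 // => Emup.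
apply: leq_trans (leq_addl (mup zeta ('X^`|v| - 1)) _) _.
rewrite Emup addnC; apply: leq_trans (mup_mul_le _ _ _) _; rewrite leq_add2r.
apply: leq_trans (mup_mul_le _ _ _) _.
apply: leq_trans (mup_bd_factors_le2 L0 z0 a0 b0 l0); rewrite leq_add2r.
exact: mup_mul_le.
Qed.

Lemma cyclotomic_root_neq0 (L : fieldType) d (zeta : L) : (0 < d)%N ->
  root (map_poly (fun z : int => z%:~R) 'Phi_d) zeta -> zeta != 0.
Proof.
move=> d0 zr; apply/negP => /eqP z0.
have := congr1 (fun P : {poly int} => (map_poly (fun z : int => z%:~R) P).[zeta])
  (prod_Cyclotomic d0).
rewrite /= rmorph_prod horner_prod (bigD1_seq d) ?divisors_uniq -?dvdn_divisors //=.
rewrite (rootP zr) mul0r rmorphB /= map_polyXn rmorph1 !hornerE z0 expr0n gtn_eqF //.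
by rewrite sub0r => /eqP; rewrite eq_sym oppr_eq0 oner_eq0.
Qed.

Theorem lemma5p1 (n : nat) (adj : rel 'I_n) (lab : 'I_n -> 'I_n -> nat)
  (K : fieldType) (m : 'I_n -> int)
  (Hgraph : simple_graph adj) (Hlab : even_labeling adj lab)
  (Hconn : connected_graph adj) (HFC : FC_type adj lab)
  (Hchar : [pchar K] =i pred0)
  (Hsurj : chi_surjective m) (Hnres : non_resonant m) :
  (* (a) *)
  (forall (r s : nat), (r + s)%N = n ->
   forall (X : 'I_r -> 'I_n * 'I_n) (Y : 'I_r -> 'I_n),
     one_acyclic K adj X Y ->
     exists vs : 'I_s -> 'I_n,
       rooted_spanning_forest adj s [set X i | i : 'I_r] vs /\
       (forall u : 'I_n, (u \notin codom Y) = (u \in codom vs)))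
  /\
  (* (b) *)
  (forall (s r r' : nat), (r + s)%N = n -> (r' + s.+1)%N = n ->
   forall (Es : {set 'I_n * 'I_n}) (vs : 'I_s -> 'I_n)
          (e : 'I_n * 'I_n) (vs' : 'I_s.+1 -> 'I_n),
     rooted_spanning_forest adj s Es vs ->
     e \in Es ->
     (forall i : 'I_s, vs' (widen_ord (leqnSn s) i) = vs i) ->
     (forall i : 'I_s, ~~ connect (sub_adj (Es :\ e)) (vs' ord_max) (vs i)) ->
   forall (X : 'I_r -> 'I_n * 'I_n) (Y : 'I_r -> 'I_n)
          (X' : 'I_r' -> 'I_n * 'I_n) (Y' : 'I_r' -> 'I_n),
     injective X -> [set X i | i : 'I_r] = Es ->
     injective Y -> (forall u, (u \in codom Y) = (u \notin codom vs)) ->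
     injective X' -> [set X' i | i : 'I_r'] = Es :\ e ->
     injective Y' -> (forall u, (u \in codom Y') = (u \notin codom vs')) ->
   forall (d : nat), (0 < d)%N ->
   forall (L : fieldType) (f : {rmorphism K -> L}) (zeta : L),
     root (map_poly (fun z : int => z%:~R) 'Phi_d) zeta ->
   forall (p p' : {poly K}) (k k' : nat),
     chi_minor K lab m X Y = tofrac p / tofrac ('X^k : {poly K}) ->
     chi_minor K lab m X' Y' = tofrac p' / tofrac ('X^k' : {poly K}) ->
     (mup zeta (map_poly f p) <= mup zeta (map_poly f p') + 2)%N).
Proof.
split=> [r s rsn X Y | s r r' rsn r's Es vs e vs' forest eEs vs'_widen new_root].
  exact: one_acyclic_rooted_forest.
move=> X Y X' Y' X_inj X_im Y_inj Y_im X'_inj X'_im Y'_inj Y'_im d d0 L f zeta zeta_root.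
move=> p p' k k' Ep Ep'; have Er : r = r'.+1 by lia.
subst r; have [sg E] := bd0_minor_delete_edge K lab Hnres forest eEs vs'_widen new_root
  X_inj X_im Y_inj Y_im X'_inj X'_im Y'_inj Y'_im.
have L0 : [pchar L] =i pred0 by move=> q; rewrite (fmorph_pchar f); apply: Hchar.
have lab_e : (0 < lab e.1 e.2)%N.
  by case: forest => -[/(_ e eEs)/andP[_ /Hlab[_ ->]] _ _] _.
apply: (mup_minor_delete_edge f L0 (cyclotomic_root_neq0 d0 zeta_root) (Hnres e.1)
  (Hnres e.2) (Hnres (vs' ord_max)) lab_e _ _ (ex_intro _ sg E)).
- by rewrite Ep; apply: laurent_assoc_frac.
- by rewrite Ep'; apply: laurent_assoc_frac.
Qed.
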